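(* Let $(V,\langle\cdot\,,\cdot\rangle_V)$ be an admissible module and $\Omega_1,\ldots,\Omega_l$ symmetric linear operators on $V$ with $\Omega_k^2=-\mathrm{Id}_V$ for all $k$ and $\Omega_k\Omega_j=-\Omega_j\Omega_k$ for all $k\neq j$. Let $P$ be a linear operator on $V$ with $P^2=\mathrm{Id}_V$ and $P\Omega_k=\Omega_kP$ for $k=1,\ldots,l$. If $w\in V$ satisfies $Pw=w$ and $\langle w,w\rangle_V=1$, then there is a vector $\tilde w\in V$ with $\langle\tilde w,\tilde w\rangle_V=1$, $\langle\tilde w,\Omega_k\tilde w\rangle_V=0$ for all $k=1,\ldots,l$, and $P\tilde w=\tilde w$.
   Context: A scalar product is a real symmetric non-degenerate bilinear form. A linear operator $\Omega$ on $V$ is symmetric if $\langle\Omega v,w\rangle_V=\langle v,\Omega w\rangle_V$ for all $v,w$. An admissible module is a real vector space $V$ which is a module over a Clifford algebra $\mathrm{Cl}_{r,s}$ (generated by $\mathbb R^{r,s}$ with $z^2=-\langle z,z\rangle\cdot1$), with representation $z\mapsto J_z$, together with a scalar product $\langle\cdot\,,\cdot\rangle_V$ satisfying $\langle J_zu,v\rangle_V=-\langle u,J_zv\rangle_V$ for all $z\in\mathbb R^{r,s}$, $u,v\in V$. *)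

(* Finite-dimensional real vector space V = 'cV[R]_n, R : realType. *)
From HB Require Import structures.
From mathcomp Require Import all_boot all_order all_algebra.
From mathcomp Require Import reals.
Set Implicit Arguments. Unset Strict Implicit. Unset Printing Implicit Defensive.
Import Order.TTheory GRing.Theory Num.Theory.
Local Open Scope ring_scope.

Definition sp (R : realType) (n : nat) (S : 'M[R]_n) (u v : 'cV[R]_n) : R :=
  (u^T *m S *m v) 0 0.

Definition scalar_product (R : realType) (n : nat) (S : 'M[R]_n) : Prop :=
  S^T = S /\ S \in unitmx.

Definition qf_rs (R : realType) (r s : nat) (z : 'rV[R]_(r + s)) : R :=
  \sum_(i < r + s) (if (i < r)%N then 1 else -1) * z 0 i ^+ 2.

(* J_z = sum_i z_i J(e_i) : the linear map z |-> J_z determined by images of the basis *)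
Definition Jz (R : realType) (r s n : nat) (J : 'I_(r + s) -> 'M[R]_n)
  (z : 'rV[R]_(r + s)) : 'M[R]_n := \sum_(i < r + s) z 0 i *: J i.

Definition clifford_module (R : realType) (r s n : nat) (J : 'I_(r + s) -> 'M[R]_n) : Prop :=
  forall z : 'rV[R]_(r + s), Jz J z *m Jz J z = - (qf_rs z)%:M.

Definition admissible_module (R : realType) (r s n : nat)
  (S : 'M[R]_n) (J : 'I_(r + s) -> 'M[R]_n) : Prop :=
  [/\ scalar_product S, clifford_module J &
      forall (z : 'rV[R]_(r + s)) (u v : 'cV[R]_n),
        sp S (Jz J z *m u) v = - sp S u (Jz J z *m v)].

Definition symmetric_op (R : realType) (n : nat) (S A : 'M[R]_n) : Prop :=
  forall v w : 'cV[R]_n, sp S (A *m v) w = sp S v (A *m w).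

(* Replacing v by a v + b Om_i v keeps P v = v (P commutes with Om_i) and
   multiplies every <v, Om_j v>, j <> i, by a^2 + b^2 (the cross terms cancel
   because Om_i and Om_j anticommute), while <v, Om_i v> becomes
   (a^2 - b^2) <v, Om_i v> - 2 a b <v, v>: a rotation by a double angle in the
   plane spanned by v and Om_i v, which can be chosen to kill it.  Doing this
   for i = 1, ..., l and normalizing gives the vector. *)
From HB Require Import structures.
From mathcomp Require Import all_boot all_order all_algebra.
From mathcomp Require Import reals.
From mathcomp Require Import ring lra.
Set Implicit Arguments.
Unset Strict Implicit.
Unset Printing Implicit Defensive.

Import Order.TTheory GRing.Theory Num.Theory.
Local Open Scope ring_scope.

Section Bilinear.
Variables (R : realType) (n : nat) (S : 'M[R]_n).

Lemma spDl u1 u2 v : sp S (u1 + u2) v = sp S u1 v + sp S u2 v.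
Proof. by rewrite /sp linearD /= !mulmxDl mxE. Qed.

Lemma spDr u v1 v2 : sp S u (v1 + v2) = sp S u v1 + sp S u v2.
Proof. by rewrite /sp !mulmxDr mxE. Qed.

Lemma spZl a u v : sp S (a *: u) v = a * sp S u v.
Proof. by rewrite /sp linearZ /= -!scalemxAl mxE. Qed.

Lemma spZr a u v : sp S u (a *: v) = a * sp S u v.
Proof. by rewrite /sp -!scalemxAr mxE. Qed.

Lemma spNr u v : sp S u (- v) = - sp S u v.
Proof. by rewrite -scaleN1r spZr mulN1r. Qed.

Lemma spC u v : S^T = S -> sp S u v = sp S v u.
Proof.
move=> symS; have tr_uSv : (u^T *m S *m v)^T = v^T *m S *m u.
  by rewrite !trmx_mul trmxK symS mulmxA.
by rewrite /sp -tr_uSv [RHS]mxE.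
Qed.

End Bilinear.

Section Rotation.
Variables (R : realType) (n l : nat) (S : 'M[R]_n).
Variables (Om : 'I_l -> 'M[R]_n) (P : 'M[R]_n).
Hypotheses (symS : S^T = S) (symOm : forall k, symmetric_op S (Om k))
  (Om_sq : forall k, Om k *m Om k = - 1%:M)
  (Om_anti : forall k j, k != j -> Om k *m Om j = - (Om j *m Om k))
  (POm : forall k, P *m Om k = Om k *m P).

Lemma sp_Om2 k u v : sp S (Om k *m u) (Om k *m v) = - sp S u v.
Proof. by rewrite symOm mulmxA Om_sq mulNmx mul1mx spNr. Qed.

Lemma sp_Om_anti k j u v : k != j ->
  sp S (Om k *m u) (Om j *m v) = - sp S u (Om j *m (Om k *m v)).
Proof. by move=> kj; rewrite symOm !mulmxA Om_anti // mulNmx spNr. Qed.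

Definition rot (i : 'I_l) (a b : R) (v : 'cV[R]_n) := a *: v + b *: (Om i *m v).

Lemma rot_fixed i a b v : P *m v = v -> P *m rot i a b v = rot i a b v.
Proof. by move=> Pv; rewrite mulmxDr -!scalemxAr mulmxA POm -mulmxA Pv. Qed.

Lemma Om_rot i a b v : Om i *m rot i a b v = a *: (Om i *m v) - b *: v.
Proof. by rewrite mulmxDr -!scalemxAr mulmxA Om_sq mulNmx mul1mx scalerN. Qed.

Lemma sp_rot i a b v :
  sp S (rot i a b v) (rot i a b v)
  = (a ^+ 2 - b ^+ 2) * sp S v v + 2 * a * b * sp S v (Om i *m v).
Proof.
rewrite /rot !(spDl, spDr, spZl, spZr) sp_Om2 [sp S (Om i *m v) v]spC //.
by ring.
Qed.

Lemma sp_rot_Om i a b v :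
  sp S (rot i a b v) (Om i *m rot i a b v)
  = (a ^+ 2 - b ^+ 2) * sp S v (Om i *m v) - 2 * a * b * sp S v v.
Proof.
rewrite Om_rot /rot !(spDl, spDr, spZl, spZr, spNr) sp_Om2.
by rewrite [sp S (Om i *m v) v]spC //; ring.
Qed.

Lemma sp_rot_Om_neq i j a b v : j != i ->
  sp S (rot i a b v) (Om j *m rot i a b v)
  = (a ^+ 2 + b ^+ 2) * sp S v (Om j *m v).
Proof.
move=> ji; rewrite /rot mulmxDr -!scalemxAr !(spDl, spDr, spZl, spZr).
rewrite !sp_Om_anti 1?eq_sym // (mulmxA (Om i)) Om_sq mulNmx mul1mx.
rewrite mulmxN spNr opprK.
by ring.
Qed.

Lemma rot_isotropic i v : P *m v = v -> 0 < sp S v v ->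
  exists x, [/\ P *m x = x, 0 < sp S x x, sp S x (Om i *m x) = 0 &
    forall j, j != i -> sp S v (Om j *m v) = 0 -> sp S x (Om j *m x) = 0].
Proof.
move=> Pv N_gt0; set N := sp S v v in N_gt0; set c := sp S v (Om i *m v).
set m := Num.sqrt (N ^+ 2 + c ^+ 2).
have m_ge0 : 0 <= m by apply: sqrtr_ge0.
have m_sq : m ^+ 2 = N ^+ 2 + c ^+ 2 by rewrite sqr_sqrtr // addr_ge0 ?sqr_ge0.
(* With m = |(N, c)|, the pair (N + m, c) is the half-angle of (N, c), so
   (a^2 - b^2, 2 a b) is proportional to (N, c). *)
exists (rot i (N + m) c v); split.
- exact: rot_fixed.
- rewrite sp_rot -/N -/c.
  have -> : ((N + m) ^+ 2 - c ^+ 2) * N + 2 * (N + m) * c * c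
            = 2 * (N + m) * m ^+ 2 + (N + 2 * m) * (N ^+ 2 + c ^+ 2 - m ^+ 2)
    by ring.
  have : 0 < N ^+ 2 by rewrite exprn_gt0.
  by rewrite -m_sq subrr mulr0 addr0 m_sq; nra.
- rewrite sp_rot_Om -/N -/c.
  have -> : ((N + m) ^+ 2 - c ^+ 2) * c - 2 * (N + m) * c * N
            = c * (m ^+ 2 - N ^+ 2 - c ^+ 2) by ring.
  by rewrite m_sq; ring.
- by move=> j ji cj; rewrite sp_rot_Om_neq // cj mulr0.
Qed.

Lemma exists_isotropic_fixed w : P *m w = w -> 0 < sp S w w ->
  exists v, [/\ P *m v = v, 0 < sp S v v &
    forall k, sp S v (Om k *m v) = 0].
Proof.
move=> Pw w_gt0.
suff /(_ l (leqnn l)) [v [Pv v_gt0 isov]] : forall m, (m <= l)%N ->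
    exists v, [/\ P *m v = v, 0 < sp S v v &
      forall k : 'I_l, (k < m)%N -> sp S v (Om k *m v) = 0].
  by exists v; split=> // k; apply: isov.
elim=> [|m IHm] lt_ml; first by exists w.
have [v [Pv v_gt0 isov]] := IHm (ltnW lt_ml).
have [x [Px x_gt0 iso_mx iso_x]] := rot_isotropic (Ordinal lt_ml) Pv v_gt0.
exists x; split=> // k; rewrite ltnS leq_eqVlt => /orP[/eqP km | lt_km].
  by rewrite (_ : k = Ordinal lt_ml) //; apply: val_inj.
by apply: iso_x; [rewrite -val_eqE /= neq_ltn lt_km | exact: isov].
Qed.

End Rotation.

Lemma sp_normalize (R : realType) (n : nat) (S : 'M[R]_n) v :
  0 < sp S v v -> sp S ((Num.sqrt (sp S v v))^-1 *: v)
                       ((Num.sqrt (sp S v v))^-1 *: v) = 1.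
Proof.
move=> N_gt0; set N := sp S v v in N_gt0 *.
have sqrtN_sq : Num.sqrt N ^+ 2 = N by rewrite sqr_sqrtr // ltW.
have sqrtN_neq0 : Num.sqrt N != 0 by rewrite gt_eqF ?sqrtr_gt0.
by rewrite spZl spZr -/N -[X in _ * (_ * X)]sqrtN_sq; field.
Qed.

Theorem corollary2p10 (R : realType) (r s n l : nat)
  (S : 'M[R]_n) (J : 'I_(r + s) -> 'M[R]_n)
  (Om : 'I_l -> 'M[R]_n) (P : 'M[R]_n) (w : 'cV[R]_n) :
  admissible_module S J ->
  (forall k, symmetric_op S (Om k)) ->
  (forall k, Om k *m Om k = - 1%:M) ->
  (forall k j, k != j -> Om k *m Om j = - (Om j *m Om k)) ->
  P *m P = 1%:M ->
  (forall k, P *m Om k = Om k *m P) ->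
  P *m w = w -> sp S w w = 1 ->
  exists wt : 'cV[R]_n,
    [/\ sp S wt wt = 1, (forall k, sp S wt (Om k *m wt) = 0) & P *m wt = wt].
Proof.
move=> [[symS _] _ _] symOm Om_sq Om_anti _ POm Pw w1.
have w_gt0 : 0 < sp S w w by rewrite w1 ltr01.
have [v [Pv v_gt0 isov]] :=
  exists_isotropic_fixed symS symOm Om_sq Om_anti POm Pw w_gt0.
exists ((Num.sqrt (sp S v v))^-1 *: v); split.
- exact: sp_normalize.
- by move=> k; rewrite -scalemxAr spZl spZr isov !mulr0.
- by rewrite -scalemxAr Pv.
Qed.
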